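(* Let $G$ be an infinite discrete group, $B$ a unital C$^*$-algebra with action $\alpha:G\to\mathrm{Aut}(B)$, $A_1=B\rtimes_{\alpha,r}G$ with implementing unitaries $u_g$ ($g\in G$), $\phi_1$ a faithful $\alpha$-invariant state on $B$ extended to $A_1$ by vanishing on $Bu_g$ for $g\ne e$, $A_2$ a unital C$^*$-algebra with faithful state $\phi_2$, and $(A,\phi)=(A_1,\phi_1)*(A_2,\phi_2)$ the reduced free product. Then the family of subalgebras $\bigl(B,\,(u_g^*A_2u_g)_{g\in G}\bigr)$ of $A$ is free with respect to $\phi$.
   Context: Reduced free product: given unital C$^*$-algebras $A_\iota$ with states $\phi_\iota$ whose GNS representations are faithful, $(A,\phi)=*_{\iota}(A_\iota,\phi_\iota)$ is the unital C$^*$-algebra $A$ containing copies of the $A_\iota$, generated by their union, with a state $\phi$ whose GNS representation is faithful on $A$, restricting to $\phi_\iota$ on each $A_\iota$, such that $(A_\iota)_\iota$ is free with respect to $\phi$. A family of unital subalgebras $(S_\iota)_{\iota\in I}$ is free with respect to $\phi$ if $\phi(a_1\cdots a_n)=0$ whenever $n\ge1$, $a_j\in S_{\iota_j}\cap\ker\phi$ and consecutive indices $\iota_j\neq\iota_{j+1}$. Here the subalgebras in the family are indexed by $\{B\}\sqcup G$, so $u_g^*A_2u_g$ and $u_h^*A_2u_h$ for $g\ne h$ count as different members. *)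

From HB Require Import structures.
From mathcomp Require Import all_boot all_order all_algebra.
From mathcomp Require Import reals complex.
Set Implicit Arguments. Unset Strict Implicit. Unset Printing Implicit Defensive.
Import Order.TTheory GRing.Theory Num.Theory.
Local Open Scope ring_scope.

Record group_law (G : Type) (mul : G -> G -> G) (inv : G -> G) (e : G) : Prop := {
  gmulA : forall x y z, mul x (mul y z) = mul (mul x y) z;
  gmul1 : forall x, mul e x = x;
  gmulV : forall x, mul (inv x) x = e }.

Definition infinite_type (G : Type) : Prop :=
  forall (n : nat) (f : nat -> G), exists g : G, forall k, (k < n)%N -> f k <> g.

Section CStar.
Variable R : realType.
Local Notation C := R[i].

Record cstar_axioms (A : algType C) (star : A -> A) (nrm : A -> R) : Prop := {
  star_invol : forall x, star (star x) = x;
  star_add : forall x y, star (x + y) = star x + star y;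
  star_scale : forall (c : C) x, star (c *: x) = (c^*)%C *: star x;
  star_mul : forall x y, star (x * y) = star y * star x;
  nrm_ge0 : forall x, 0 <= nrm x;
  nrm_eq0 : forall x, nrm x = 0 -> x = 0;
  nrm_add : forall x y, nrm (x + y) <= nrm x + nrm y;
  nrm_scale : forall (c : C) x, (nrm (c *: x))%:C%C = `|c| * (nrm x)%:C%C;
  nrm_mul : forall x y, nrm (x * y) <= nrm x * nrm y;
  nrm_cstar : forall x, nrm (star x * x) = nrm x ^+ 2;
  nrm_complete : forall u : nat -> A,
    (forall eps : R, 0 < eps -> exists N, forall m n, (N <= m)%N -> (N <= n)%N ->
        nrm (u m - u n) < eps) ->
    exists l : A, forall eps : R, 0 < eps -> exists N, forall n, (N <= n)%N ->
        nrm (u n - l) < eps }.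

Record cstar_alg := CStarAlg {
  cs_alg :> algType C;
  cs_star : cs_alg -> cs_alg;
  cs_norm : cs_alg -> R;
  cs_ax : cstar_axioms cs_star cs_norm }.

Variable A : cstar_alg.
Local Notation "x ^#" := (cs_star x) (at level 2, format "x ^#").

Definition is_state (phi : A -> C) : Prop :=
  [/\ forall (c : C) x y, phi (c *: x + y) = c * phi x + phi y,
      forall x, 0 <= phi (x^# * x) & phi 1 = 1].

Definition faithful_on (phi : A -> C) (S : A -> Prop) : Prop :=
  forall a, S a -> phi (a^# * a) = 0 -> a = 0.

(* the GNS representation of phi restricted to the subalgebra D is faithful on D:
   pi(a) = 0 iff <pi(a) xi_x, pi(a) xi_x> = phi(x^* a^* a x) = 0 for all x in D *)
Definition GNS_faithful_on (phi : A -> C) (D : A -> Prop) : Prop :=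
  forall a, D a -> (forall x, D x -> phi (x^# * (a^# * a) * x) = 0) -> a = 0.

Definition cs_unitary (u : A) : Prop := u^# * u = 1 /\ u * u^# = 1.

Definition is_csubalg (S : A -> Prop) : Prop :=
  [/\ S 1,
      (forall x y, S x -> S y -> S (x + y)),
      (forall (c : C) x, S x -> S (c *: x)),
      (forall x y, S x -> S y -> S (x * y)) &
      (forall x, S x -> S (x^#))] /\
  (forall (u : nat -> A) l, (forall n, S (u n)) ->
        (forall eps : R, 0 < eps -> exists N, forall n, (N <= n)%N ->
           cs_norm (u n - l) < eps) -> S l).

Definition cgenerated (D T : A -> Prop) : Prop :=
  [/\ is_csubalg D, (forall x, T x -> D x) &
      forall S, is_csubalg S -> (forall x, T x -> S x) -> forall x, D x -> S x].

Definition free_family (I : Type) (phi : A -> C) (S : I -> A -> Prop) : Prop :=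
  forall (n : nat) (idx : nat -> I) (a : nat -> A),
    (0 < n)%N ->
    (forall j, (j < n)%N -> S (idx j) (a j) /\ phi (a j) = 0) ->
    (forall j, (j.+1 < n)%N -> idx j <> idx j.+1) ->
    phi (\prod_(j < n) a j) = 0.

End CStar.

(* Conjugating an alternating word in B and the u_g^* A2 u_g by the unitaries
   regroups it as a word over the free pair (A1, A2): between two consecutive
   A2-letters sits either u_g u_h^* with g <> h or u_g b u_h^* with b centred
   in B, and both are centred in A1 because phi kills B u_k for k <> e and is
   alpha-invariant.  The A1-factors at the two ends need not be centred, but
   splitting them as phi(x) 1 + (x - phi(x) 1) reduces phi of the whole product
   to phi of reduced words, which vanish by freeness of (A1, A2).  The same
   splitting shows phi(u_g^* c u_g) = phi(c) for c in A2, so centred letters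
   u_g^* c u_g come from centred c. *)
From HB Require Import structures.
From mathcomp Require Import all_boot all_order all_algebra.
From mathcomp Require Import reals complex.
From Stdlib Require Import Classical_Prop.
Set Implicit Arguments. Unset Strict Implicit. Unset Printing Implicit Defensive.
Import Order.TTheory GRing.Theory Num.Theory.
Local Open Scope ring_scope.

Section CStarFacts.
Variables (R : realType) (A : cstar_alg R).

Lemma cs_star1 : cs_star (1 : A) = 1.
Proof.
have [invol _ _ smul _ _ _ _ _ _ _] := cs_ax A.
have -> : cs_star (1 : A) = cs_star 1 * cs_star (cs_star 1) by rewrite invol mulr1.
by rewrite -smul mulr1 invol.
Qed.

Variable S : A -> Prop.
Hypothesis HS : is_csubalg S.

Lemma csubalg1 : S 1.
Proof. by have [[]] := HS. Qed.

Lemma csubalgD x y : S x -> S y -> S (x + y).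
Proof. by have [[_ SD _ _ _] _] := HS; apply: SD. Qed.

Lemma csubalgZ c x : S x -> S (c *: x).
Proof. by have [[_ _ SZ _ _] _] := HS; apply: SZ. Qed.

Lemma csubalgM x y : S x -> S y -> S (x * y).
Proof. by have [[_ _ _ SM _] _] := HS; apply: SM. Qed.

Lemma csubalg_star x : S x -> S (cs_star x).
Proof. by have [[_ _ _ _ SV] _] := HS; apply: SV. Qed.

End CStarFacts.

Section States.
Variables (R : realType) (A : cstar_alg R) (phi : A -> R[i]).
Hypothesis Hphi : is_state phi.

Lemma stateD x y : phi (x + y) = phi x + phi y.
Proof. by case: Hphi => lin _ _; have := lin 1 x y; rewrite scale1r mul1r. Qed.

Lemma state0 : phi 0 = 0.
Proof. by apply: (addrI (phi 0)); rewrite -stateD !addr0. Qed.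

Lemma stateZ c x : phi (c *: x) = c * phi x.
Proof. by case: Hphi => lin _ _; have := lin c x 0; rewrite !addr0 state0 addr0. Qed.

Lemma state1 : phi 1 = 1.
Proof. by case: Hphi. Qed.

Definition centering (x : A) : A := x - phi x *: 1.

Lemma centeringE x : x = phi x *: 1 + centering x.
Proof. by rewrite addrC subrK. Qed.

Lemma state_centering x : phi (centering x) = 0.
Proof. by rewrite /centering -scaleNr addrC stateD stateZ state1 mulr1 addNr. Qed.

Lemma csubalg_centering S x : is_csubalg S -> S x -> S (centering x).
Proof.
move=> HS Sx; rewrite /centering -scaleNr.
by apply: csubalgD => //; apply: csubalgZ => //; apply: csubalg1.
Qed.

End States.

Section Words.
Variables (R : realType) (A : cstar_alg R) (phi : A -> R[i]).
Variables (I : eqType) (S : I -> A -> Prop).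

Definition word_prod (w : seq (I * A)) : A := \prod_(p <- w) p.2.

Definition reduced_word (w : seq (I * A)) : Prop :=
  sorted (fun p q => p.1 != q.1) w /\ forall p, p \in w -> S p.1 p.2 /\ phi p.2 = 0.

Lemma word_prod_cons i x w : word_prod ((i, x) :: w) = x * word_prod w.
Proof. by rewrite /word_prod big_cons. Qed.

Lemma word_prod_rcons w i x : word_prod (rcons w (i, x)) = word_prod w * x.
Proof. by rewrite /word_prod big_rcons. Qed.

Lemma word_prod1 i x : word_prod [:: (i, x)] = x.
Proof. by rewrite /word_prod big_seq1. Qed.

Lemma reduced_word1 p : S p.1 p.2 -> phi p.2 = 0 -> reduced_word [:: p].
Proof. by move=> Sp php; split=> // q; rewrite inE => /eqP ->. Qed.

Lemma reduced_cons p w : reduced_word w -> (head p w).1 != p.1 ->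
  S p.1 p.2 -> phi p.2 = 0 -> reduced_word (p :: w).
Proof.
move=> [alt letters] hw Sp php; split.
  by case: w alt letters hw => //= q w' -> _; rewrite eq_sym => ->.
by move=> q; rewrite inE => /predU1P [-> | /letters].
Qed.

Lemma reduced_rcons w p : reduced_word w -> (last p w).1 != p.1 ->
  S p.1 p.2 -> phi p.2 = 0 -> reduced_word (rcons w p).
Proof.
move=> [alt letters] hw Sp php; split.
  by case: w alt letters hw => //= q w' alt _ hw; rewrite rcons_path alt.
by move=> q; rewrite mem_rcons inE => /predU1P [-> | /letters].
Qed.

Lemma free_family_word w : free_family phi S -> reduced_word w -> w != [::] ->
  phi (word_prod w) = 0.
Proof.
case: w => // p0 w' HF [alt letters] _; set w := p0 :: w'.
rewrite /word_prod (big_nth p0) big_mkord.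
apply: (HF (size w) (fun j => (nth p0 w j).1) (fun j => (nth p0 w j).2)) => //.
  by move=> j hj; apply: letters; rewrite mem_nth.
by move=> j hj; move/(sortedP p0): alt => /(_ j hj)/eqP.
Qed.

End Words.

Section FreePair.
Variables (R : realType) (A : cstar_alg R) (phi : A -> R[i]) (A1 A2 : A -> Prop).
Hypothesis Hphi : is_state phi.
Hypothesis HA1 : is_csubalg A1.
Local Notation A12 := (fun b : bool => if b then A1 else A2).
Hypothesis Hfree : free_family phi A12.

(* The default letter [(true, 0)] makes both conditions fail on the empty word. *)
Definition bracketed (w : seq (bool * A)) : Prop :=
  [/\ reduced_word phi A12 w, (head (true, 0) w).1 = false & (last (true, 0) w).1 = false].

Lemma bracketed1 c : A2 c -> phi c = 0 -> bracketed [:: (false, c)].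
Proof. by move=> A2c phic; split=> //; apply: reduced_word1. Qed.

Lemma bracketed_rcons w z c : bracketed w -> A1 z -> phi z = 0 -> A2 c -> phi c = 0 ->
  bracketed (rcons (rcons w (true, z)) (false, c)).
Proof.
move=> [red hw lw] A1z phiz A2c phic; split; last by rewrite last_rcons.
- apply: reduced_rcons => //; last by rewrite last_rcons.
  by apply: reduced_rcons => //; case: w lw {red hw} => //= q w' ->.
- by case: w hw {red lw}.
Qed.

Lemma state_word_prod_mulr w y : reduced_word phi A12 w ->
  (last (true, 0) w).1 = false -> A1 y -> phi (word_prod w * y) = 0.
Proof.
move=> red lw A1y.
rewrite (centeringE phi y) mulrDr -scalerAr mulr1 stateD // stateZ //.
have nz : w != [::] by case: (w) lw.
rewrite (free_family_word Hfree red nz) mulr0 add0r.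
rewrite -(word_prod_rcons w true).
apply: (free_family_word Hfree); last by case: (w) nz.
apply: reduced_rcons => //=; last exact: state_centering.
  by case: w lw {red nz} => //= q w' ->.
exact: csubalg_centering HA1 A1y.
Qed.

Lemma state_bracketed x w y : bracketed w -> A1 x -> A1 y ->
  phi (x * word_prod w * y) = 0.
Proof.
move=> [red hw lw] A1x A1y.
rewrite (centeringE phi x) (mulrDl _ (centering phi x)) mulrDl.
rewrite -!scalerAl mul1r stateD // stateZ //.
rewrite state_word_prod_mulr // mulr0 add0r -(word_prod_cons true).
apply: state_word_prod_mulr => //; last by case: w lw {red hw}.
apply: reduced_cons => //=; first by case: w hw {red lw} => //= q w' ->.
  exact: csubalg_centering HA1 A1x.
exact: state_centering.
Qed.

End FreePair.

Section GroupLaw.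
Variables (G : Type) (gmul : G -> G -> G) (ginv : G -> G) (e : G).
Hypothesis HG : group_law gmul ginv e.

Lemma gmulVr x : gmul x (ginv x) = e.
Proof.
case: HG => mulA mul1 mulV.
have idem : gmul (gmul x (ginv x)) (gmul x (ginv x)) = gmul x (ginv x).
  by rewrite -mulA (mulA (ginv x)) mulV mul1.
by rewrite -[LHS]mul1 -(mulV (gmul x (ginv x))) -mulA idem.
Qed.

Lemma gmulr1 x : gmul x e = x.
Proof. by case: HG => mulA mul1 mulV; rewrite -(mulV x) mulA gmulVr mul1. Qed.

Lemma gmulVr_eq1 g h : gmul g (ginv h) = e -> g = h.
Proof.
case: HG => mulA mul1 mulV E.
by rewrite -[g]gmulr1 -(mulV h) mulA E mul1.
Qed.

End GroupLaw.

Section CrossedProduct.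
Variables (R : realType) (G : Type) (gmul : G -> G -> G) (ginv : G -> G) (e : G).
Hypothesis HG : group_law gmul ginv e.
Variables (A : cstar_alg R) (phi : A -> R[i]) (B A1 A2 : A -> Prop).
Variables (alpha : G -> A -> A) (u : G -> A).
Hypothesis Hu_unit : forall g, cs_unitary (u g).
Hypothesis Hu_e : u e = 1.
Hypothesis Hu_mul : forall g h, u (gmul g h) = u g * u h.
Hypothesis Hu_cov : forall g x, B x -> u g * x * cs_star (u g) = alpha g x.
Hypothesis Halpha_B : forall g x, B x -> B (alpha g x).
Hypothesis Hphi_alpha : forall g x, B x -> phi (alpha g x) = phi x.
Hypothesis Hphi_Bu : forall g x, B x -> g <> e -> phi (x * u g) = 0.

Lemma u_star g : cs_star (u g) = u (ginv g).
Proof.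
have [_ uVu] := Hu_unit g.
have [_ _ mulV] := HG.
by rewrite -[LHS]mul1r -Hu_e -(mulV g) Hu_mul -mulrA uVu mulr1.
Qed.

Lemma u_B_u_star g h b : B b ->
  u g * b * cs_star (u h) = alpha g b * u (gmul g (ginv h)).
Proof.
move=> Bb; have [uVu _] := Hu_unit g.
by rewrite -Hu_cov // Hu_mul -u_star -!mulrA (mulrA (cs_star _)) uVu mul1r.
Qed.

Lemma state_u_B_u_star g h b : B b -> g <> h \/ phi b = 0 ->
  phi (u g * b * cs_star (u h)) = 0.
Proof.
move=> Bb gh_or_b; rewrite u_B_u_star //.
case: (classic (gmul g (ginv h) = e)) => [E | ne]; last exact: Hphi_Bu (Halpha_B _ Bb) ne.
rewrite E Hu_e mulr1 Hphi_alpha //.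
by case: gh_or_b => // /(_ (gmulVr_eq1 HG E)).
Qed.

Hypothesis Hphi : is_state phi.
Hypothesis HB : is_csubalg B.
Hypothesis HA1 : is_csubalg A1.
Hypothesis HA2 : is_csubalg A2.
Hypothesis HBA1 : forall x, B x -> A1 x.
Hypothesis HuA1 : forall g, A1 (u g).
Hypothesis Hfree : free_family phi (fun b : bool => if b then A1 else A2).

Lemma state_conj_A2 g c : A2 c -> phi (cs_star (u g) * c * u g) = phi c.
Proof.
move=> A2c; have [uVu _] := Hu_unit g.
rewrite [in LHS](centeringE phi c) (mulrDr _ _ (centering phi c)).
rewrite (mulrDl _ _ (u g)) -scalerAr -scalerAl mulr1 uVu.
rewrite stateD // stateZ // state1 // mulr1 -(word_prod1 false (centering phi c)).
rewrite (state_bracketed Hphi HA1 Hfree) ?addr0 //.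
- apply: bracketed1; first exact: csubalg_centering.
  exact: state_centering.
- exact: csubalg_star.
Qed.

Definition conj_family (i : option G) : A -> Prop :=
  if i is Some g then fun x => exists2 c, A2 c & x = cs_star (u g) * c * u g else B.

Section AlternatingProduct.
Variables (n : nat) (idx : nat -> option G) (a : nat -> A).
Hypothesis Hletters : forall j, (j < n)%N -> conj_family (idx j) (a j) /\ phi (a j) = 0.
Hypothesis Halt : forall j, (j.+1 < n)%N -> idx j <> idx j.+1.

Lemma conj_letter j g : (j < n)%N -> idx j = Some g ->
  exists2 c, A2 c /\ phi c = 0 & a j = cs_star (u g) * c * u g.
Proof.
move=> hj E; have [] := Hletters hj; rewrite E => -[c A2c ->].
by rewrite state_conj_A2 // => phic; exists c.
Qed.

Lemma B_letter j : (j < n)%N -> idx j = None -> B (a j) /\ phi (a j) = 0.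
Proof. by move=> hj E; have := Hletters hj; rewrite E. Qed.

Definition tail_ok k (y : A) : Prop := exists h b,
  [/\ B b, y = u h * b & if idx k is Some g then g = h /\ b = 1 else phi b = 0].

Lemma tail_ok_A1 k y : tail_ok k y -> A1 y.
Proof. by move=> [h [b [Bb -> _]]]; apply: csubalgM => //; apply: HBA1. Qed.

Lemma tail_ok_state k y h : tail_ok k y -> Some h <> idx k ->
  phi (y * cs_star (u h)) = 0.
Proof.
move=> [h0 [b [Bb -> cond]]] hk; apply: state_u_B_u_star => //.
case: (idx k) hk cond => [g hk [<- _] | _ phib]; last by right.
by left=> gh; apply: hk; rewrite gh.
Qed.

Definition prefix k : A := \prod_(j < k.+1) a j.

(* [prefix k] regrouped over the free pair (A1, A2) as [x * w * y]; the tail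
   [y = u_h b] is what remains of the last letters and gets merged into the next
   A1-letter.  The first alternative is a prefix made of a single letter of B. *)
Definition prefix_form k : Prop := exists2 y, tail_ok k y &
  (idx k = None /\ prefix k = y) \/
  exists x w, [/\ A1 x, bracketed phi A1 A2 w & prefix k = x * word_prod w * y].

Lemma prefix_form0 : (0 < n)%N -> prefix_form 0.
Proof.
move=> n0; rewrite /prefix_form /prefix big_ord1.
case E: (idx 0) => [g|].
- have [c [A2c phic] ->] := conj_letter n0 E.
  exists (u g); first by exists g, 1; rewrite E mulr1; split=> //; apply: csubalg1.
  right; exists (cs_star (u g)), [:: (false, c)]; split.
  + exact: csubalg_star.
  + exact: bracketed1.
  + by rewrite word_prod1.
- have [Ba0 phia0] := B_letter n0 E.
  by exists (a 0); [exists e, (a 0); rewrite Hu_e mul1r E | left].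
Qed.

Lemma prefixS k : prefix k.+1 = prefix k * a k.+1.
Proof. by rewrite /prefix big_ord_recr. Qed.

Lemma prefix_form_conj k h : (k.+1 < n)%N -> idx k.+1 = Some h ->
  prefix_form k -> prefix_form k.+1.
Proof.
move=> hk E [y Ty form].
have [c [A2c phic] Ea] := conj_letter hk E.
have hne : Some h <> idx k by rewrite -E => /esym; apply: Halt.
have phiz := tail_ok_state Ty hne.
have A1z : A1 (y * cs_star (u h)).
  by apply: csubalgM => //; [apply: tail_ok_A1 Ty | apply: csubalg_star].
exists (u h); first by exists h, 1; rewrite E mulr1; split=> //; apply: csubalg1.
right; rewrite prefixS Ea.
case: form => [[_ ->] | [x [w [A1x bw ->]]]].
- exists (y * cs_star (u h)), [:: (false, c)]; split=> //; first exact: bracketed1.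
  by rewrite word_prod1 !mulrA.
- exists x, (rcons (rcons w (true, y * cs_star (u h))) (false, c)); split=> //.
  + exact: bracketed_rcons.
  + by rewrite !word_prod_rcons !mulrA.
Qed.

Lemma prefix_form_B k : (k.+1 < n)%N -> idx k.+1 = None ->
  prefix_form k -> prefix_form k.+1.
Proof.
move=> hk E [y [h [b [Bb -> cond]]] form].
have [Bak phiak] := B_letter hk E.
case E0: (idx k) cond form => [g|] cond form; last by case: (Halt hk); rewrite E0 E.
case: cond form => <- -> form; rewrite mulr1 in form.
exists (u g * a k.+1); first by exists g, (a k.+1); rewrite E.
case: form => [[//] | [x [w [A1x bw Ep]]]].
by right; exists x, w; rewrite prefixS Ep -mulrA.
Qed.

Lemma prefix_form_all k : (k < n)%N -> prefix_form k.
Proof.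
elim: k => [|k IH] hk; first exact: prefix_form0.
have IHk := IH (ltnW hk).
by case E: (idx k.+1) => [h|]; [apply: prefix_form_conj E _ | apply: prefix_form_B E _].
Qed.

Lemma state_alternating_prod : (0 < n)%N -> phi (\prod_(j < n) a j) = 0.
Proof.
move=> n0; have [|y Ty form] := @prefix_form_all n.-1; first by rewrite prednK.
have -> : \prod_(j < n) a j = prefix n.-1 by rewrite /prefix; case: n n0.
case: form => [[E ->] | [x [w [A1x bw ->]]]].
- by have := tail_ok_state (h := e) Ty; rewrite E Hu_e cs_star1 mulr1; apply.
- by apply: (state_bracketed Hphi HA1 Hfree) => //; apply: tail_ok_A1 Ty.
Qed.

End AlternatingProduct.

Lemma free_family_conj : free_family phi conj_family.
Proof. by move=> n idx a n0 Hletters Halt; apply: state_alternating_prod Hletters Halt n0. Qed.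

End CrossedProduct.

Theorem mainTheorem2
  (R : realType)
  (* infinite discrete group *)
  (G : Type) (gmul : G -> G -> G) (ginv : G -> G) (e : G)
  (HG : group_law gmul ginv e) (Hinf : infinite_type G)
  (* the ambient reduced free product A with state phi *)
  (A : cstar_alg R) (phi : A -> R[i])
  (* B, its action alpha, the implementing unitaries u, A1 = B >< G, A2 *)
  (B A1 A2 : A -> Prop) (alpha : G -> A -> A) (u : G -> A)
  (* B is a unital C*-algebra, alpha an action of G by *-automorphisms of B *)
  (HB : is_csubalg B)
  (Halpha_hom : forall g, [/\ alpha g 1 = 1,
       forall x y, B x -> B y -> alpha g (x + y) = alpha g x + alpha g y,
       forall (c : R[i]) x, B x -> alpha g (c *: x) = c *: alpha g x,
       forall x y, B x -> B y -> alpha g (x * y) = alpha g x * alpha g y &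
       forall x, B x -> alpha g (cs_star x) = cs_star (alpha g x)])
  (Halpha_bij : forall g, (forall x, B x -> B (alpha g x)) /\
       (forall y, B y -> exists2 x, B x & alpha g x = y))
  (Halpha_act : forall x, B x -> alpha e x = x)
  (Halpha_mul : forall g h x, B x -> alpha (gmul g h) x = alpha g (alpha h x))
  (* A1 = B >< _{alpha,r} G, with implementing unitaries u_g *)
  (Hu_unit : forall g, cs_unitary (u g))
  (Hu_e : u e = 1)
  (Hu_mul : forall g h, u (gmul g h) = u g * u h)
  (Hu_cov : forall g x, B x -> u g * x * cs_star (u g) = alpha g x)
  (HA1 : cgenerated A1 (fun x => B x \/ exists g, x = u g))
  (* phi_1 := phi on A1: a faithful alpha-invariant state on B, extended by
     vanishing on B u_g (g <> e), whose GNS representation is faithful on A1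
     (this characterises A1 as the reduced crossed product) *)
  (Hphi1_faith : faithful_on phi B)
  (Hphi1_inv : forall g x, B x -> phi (alpha g x) = phi x)
  (Hphi1_ext : forall g x, B x -> g <> e -> phi (x * u g) = 0)
  (HA1_red : GNS_faithful_on phi A1)
  (* A2 a unital C*-algebra with faithful state phi_2 := phi on A2 *)
  (HA2 : is_csubalg A2)
  (Hphi2_faith : faithful_on phi A2)
  (* (A, phi) = (A1, phi_1) * (A2, phi_2), the reduced free product *)
  (Hphi : is_state phi)
  (HA_gen : cgenerated (fun _ => True) (fun x => A1 x \/ A2 x))
  (HA_red : GNS_faithful_on phi (fun _ => True))
  (HA_free : free_family phi (fun b : bool => if b then A1 else A2)) :
  free_family phi
    (fun i : option G => match i with
       | None => B
       | Some g => fun x => exists2 a, A2 a & x = cs_star (u g) * a * u g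
       end).

Proof.
have [A1_csub A1_gens _] := HA1.
apply: (free_family_conj HG Hu_unit Hu_e Hu_mul Hu_cov _ Hphi1_inv Hphi1_ext
          Hphi HB A1_csub HA2 _ _ HA_free).
- by move=> g; case: (Halpha_bij g).
- by move=> x Bx; apply: A1_gens; left.
- by move=> g; apply: A1_gens; right; exists g.
Qed.
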